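(* Let $G$ be a group. Then the categories $\mathrm{Act}(G)$, $\mathrm{bAct}(G)$, $\mathrm{Act}_l(G)$ and $\mathrm{Act}_r(G)$ are all equivalent to each other, and the categories $\mathrm{ACT}(G)$, $\mathrm{bACT}(G)$, $\mathrm{ACT}_l(G)$ and $\mathrm{ACT}_r(G)$ are all equivalent to each other.
   Context: For a set $X$, $\mathrm{End}_l(X)$ denotes self-maps of $X$ written on the left with product $f\circ g$ ($g$ first); $\mathrm{End}_r(X)$ denotes self-maps written on the right, $x\mapsto(x)f$, with $(x)(fg)=((x)f)g$. For a semigroup (resp. monoid) $I$, an $I$-set is a set $X$ with a pair $\xi=(\xi_l,\xi_r)$ of semigroup (resp. monoid) homomorphisms $\xi_l:I\to\mathrm{End}_l(X)$, $\xi_r:I\to\mathrm{End}_r(X)$ with $(\xi_l(i)(x))\xi_r(j)=\xi_l(i)((x)\xi_r(j))$ for all $i,j,x$. A function $f:X\to Y$ between $I$-sets $(X,\xi)$, $(Y,\eta)$ is $I$-equivariant if $(f(\xi_l(i)(x)))\eta_r(i)=\eta_l(i)(f((x)\xi_r(i)))$ for all $i,x$. An $I$-set is semi-invertible if for every $i$ at least one of $\xi_l(i)$, $\xi_r(i)$ is bijective; it is invertible on one side if either $\xi_l(i)$ is bijective for all $i$ or $\xi_r(i)$ is bijective for all $i$. $\mathrm{ACT}(I)$ (resp. $\mathrm{Act}(I)$) is the category whose objects are $I$-sets (resp. finite $I$-sets) that are products (with componentwise action) of semi-invertible $I$-sets, and $\mathrm{bACT}(I)$ (resp. $\mathrm{bAct}(I)$)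 is the category whose objects are $I$-sets (resp. finite $I$-sets) that are products of $I$-sets invertible on one side; in all four, morphisms are $I$-equivariant functions. $\mathrm{ACT}_l(I)$, $\mathrm{ACT}_r(I)$, $\mathrm{Act}_l(I)$, $\mathrm{Act}_r(I)$ denote the usual categories of left $I$-sets, right $I$-sets, finite left $I$-sets and finite right $I$-sets (single actions in the usual sense), with the usual equivariant maps. *)

From Stdlib Require Import List ProofIrrelevance.

Record Group := {
  gcar :> Type;
  gmul : gcar -> gcar -> gcar;
  gone : gcar;
  ginv : gcar -> gcar;
  gassoc : forall a b c, gmul a (gmul b c) = gmul (gmul a b) c;
  gmul1l : forall a, gmul gone a = a;
  gmul1r : forall a, gmul a gone = a;
  gmulVl : forall a, gmul (ginv a) a = gone;
  gmulVr : forall a, gmul a (ginv a) = gone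
}.

Definition bijective {A B : Type} (f : A -> B) : Prop :=
  exists g : B -> A, (forall x, g (f x) = x) /\ (forall y, f (g y) = y).

Definition finite_type (A : Type) : Prop :=
  exists l : list A, forall x : A, In x l.

(* ---------- I-sets for I = G viewed as a monoid ----------
   il i  is xi_l(i) in End_l(X): il (i*j) = il i o il j   (j first).
   ir i  is xi_r(i) in End_r(X), written x |-> (x)xi_r(i):
         (x)xi_r(i j) = ((x)xi_r(i))xi_r(j), i.e. ir (i*j) x = ir j (ir i x). *)
Record ISet (G : Group) := {
  icar : Type;
  il : G -> icar -> icar;
  ir : G -> icar -> icar;
  il_one : forall x, il (gone G) x = x;
  il_mul : forall i j x, il (gmul G i j) x = il i (il j x);
  ir_one : forall x, ir (gone G) x = x;
  ir_mul : forall i j x, ir (gmul G i j) x = ir j (ir i x);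
  il_ir : forall i j x, ir j (il i x) = il i (ir j x)
}.
Arguments icar {G}.
Arguments il {G}.
Arguments ir {G}.

Definition iequivariant {G : Group} (X Y : ISet G) (f : icar X -> icar Y) : Prop :=
  forall (i : G) (x : icar X), ir Y i (f (il X i x)) = il Y i (f (ir X i x)).

Definition semi_invertible {G : Group} (X : ISet G) : Prop :=
  forall i : G, bijective (il X i) \/ bijective (ir X i).

Definition invertible_one_side {G : Group} (X : ISet G) : Prop :=
  (forall i : G, bijective (il X i)) \/ (forall i : G, bijective (ir X i)).

Definition is_product_of {G : Group} (P : ISet G -> Prop) (X : ISet G) : Prop :=
  exists (J : Type) (Y : J -> ISet G) (phi : icar X -> forall j, icar (Y j)),
    (forall j, P (Y j)) /\ bijective phi /\
    (forall i x, phi (il X i x) = (fun j => il (Y j) i (phi x j))) /\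
    (forall i x, phi (ir X i x) = (fun j => ir (Y j) i (phi x j))).

Record LSet (G : Group) := {
  lcar : Type;
  lact : G -> lcar -> lcar;
  lact_one : forall x, lact (gone G) x = x;
  lact_mul : forall g h x, lact (gmul G g h) x = lact g (lact h x)
}.
Arguments lcar {G}.
Arguments lact {G}.

Record RSet (G : Group) := {
  rcar : Type;
  ract : G -> rcar -> rcar;    (* ract g x is (x)g *)
  ract_one : forall x, ract (gone G) x = x;
  ract_mul : forall g h x, ract (gmul G g h) x = ract h (ract g x)
}.
Arguments rcar {G}.
Arguments ract {G}.

Record Category := {
  Ob : Type;
  Hom : Ob -> Ob -> Type;
  idm : forall A, Hom A A;
  comp : forall A B C, Hom B C -> Hom A B -> Hom A C;
  comp_id_l : forall A B (f : Hom A B), comp A B B (idm B) f = f;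
  comp_id_r : forall A B (f : Hom A B), comp A A B f (idm A) = f;
  comp_assoc : forall A B C D (f : Hom A B) (g : Hom B C) (h : Hom C D),
      comp A B D (comp B C D h g) f = comp A C D h (comp A B C g f)
}.
Arguments Hom {c}.
Arguments idm {c}.
Arguments comp {c A B C}.

Record Functor (C D : Category) := {
  fobj : Ob C -> Ob D;
  fmap : forall A B, Hom A B -> Hom (fobj A) (fobj B);
  fmap_id : forall A, fmap A A (idm A) = idm (fobj A);
  fmap_comp : forall A B E (f : Hom A B) (g : Hom B E),
      fmap A E (comp g f) = comp (fmap B E g) (fmap A B f)
}.
Arguments fobj {C D}.
Arguments fmap {C D} _ {A B}.

Definition id_functor (C : Category) : Functor C C.
Proof.
  refine {| fobj := fun A => A; fmap := fun A B f => f |}; reflexivity.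
Defined.

Definition comp_functor {C D E : Category} (G : Functor D E) (F : Functor C D)
  : Functor C E.
Proof.
  refine {| fobj := fun A => fobj G (fobj F A);
            fmap := fun A B f => fmap G (fmap F f) |}.
  - intros A. rewrite (fmap_id _ _ F), (fmap_id _ _ G). reflexivity.
  - intros A B X f g. rewrite (fmap_comp _ _ F), (fmap_comp _ _ G). reflexivity.
Defined.

Definition nat_iso {C D : Category} (F G : Functor C D) : Prop :=
  exists (alpha : forall A, Hom (fobj F A) (fobj G A))
         (beta : forall A, Hom (fobj G A) (fobj F A)),
    (forall A, comp (alpha A) (beta A) = idm (fobj G A)) /\
    (forall A, comp (beta A) (alpha A) = idm (fobj F A)) /\
    (forall A B (f : Hom A B), comp (fmap G f) (alpha A) = comp (alpha B) (fmap F f)).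

Definition equivalent_cats (C D : Category) : Prop :=
  exists (F : Functor C D) (G : Functor D C),
    nat_iso (comp_functor G F) (id_functor C) /\
    nat_iso (comp_functor F G) (id_functor D).

Definition mkConcrete (O : Type) (car : O -> Type)
  (H : forall A B : O, (car A -> car B) -> Prop)
  (Hid : forall A, H A A (fun x => x))
  (Hcomp : forall A B C (f : car A -> car B) (g : car B -> car C),
      H A B f -> H B C g -> H A C (fun x => g (f x))) : Category.
Proof.
  refine {| Ob := O;
            Hom := fun A B => { f : car A -> car B | H A B f };
            idm := fun A => exist _ (fun x => x) (Hid A);
            comp := fun A B C g f =>
                      exist _ (fun x => proj1_sig g (proj1_sig f x))
                        (Hcomp A B C _ _ (proj2_sig f) (proj2_sig g)) |}.
  - intros A B [f Hf]. apply subset_eq_compat. reflexivity.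
  - intros A B [f Hf]. apply subset_eq_compat. reflexivity.
  - intros A B C D [f Hf] [g Hg] [h Hh]. apply subset_eq_compat. reflexivity.
Defined.

Lemma iequivariant_id {G : Group} (X : ISet G) : iequivariant X X (fun x => x).
Proof. intros i x. apply il_ir. Qed.

Lemma ir_inv_l {G : Group} (X : ISet G) (i : G) (x : icar X) :
  ir X (ginv G i) (ir X i x) = x.
Proof. rewrite <- ir_mul, gmulVr. apply ir_one. Qed.

Lemma ir_inv_r {G : Group} (X : ISet G) (i : G) (x : icar X) :
  ir X i (ir X (ginv G i) x) = x.
Proof. rewrite <- ir_mul, gmulVl. apply ir_one. Qed.

Lemma iequivariant_comp {G : Group} (X Y Z : ISet G)
  (f : icar X -> icar Y) (g : icar Y -> icar Z) :
  iequivariant X Y f -> iequivariant Y Z g -> iequivariant X Z (fun x => g (f x)).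
Proof.
  intros Hf Hg i x.
  assert (E : f (il X i x) = il Y i (ir Y (ginv G i) (f (ir X i x)))).
  { rewrite <- il_ir, <- Hf. symmetry. apply ir_inv_l. }
  rewrite E, Hg, ir_inv_r. reflexivity.
Qed.

Definition lequivariant {G : Group} (X Y : LSet G) (f : lcar X -> lcar Y) : Prop :=
  forall g x, f (lact X g x) = lact Y g (f x).
Definition requivariant {G : Group} (X Y : RSet G) (f : rcar X -> rcar Y) : Prop :=
  forall g x, f (ract X g x) = ract Y g (f x).

Definition biset_cat (G : Group) (P : ISet G -> Prop) : Category :=
  @mkConcrete { X : ISet G | P X } (fun X => icar (proj1_sig X))
    (fun X Y f => iequivariant (proj1_sig X) (proj1_sig Y) f)
    (fun X => iequivariant_id (proj1_sig X))
    (fun X Y Z f g => iequivariant_comp (proj1_sig X) (proj1_sig Y) (proj1_sig Z) f g).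

Definition lset_cat (G : Group) (P : LSet G -> Prop) : Category.
Proof.
  refine (@mkConcrete { X : LSet G | P X } (fun X => lcar (proj1_sig X))
    (fun X Y f => lequivariant (proj1_sig X) (proj1_sig Y) f) _ _).
  - intros X g x. reflexivity.
  - intros X Y Z f h Hf Hh g x. rewrite Hf, Hh. reflexivity.
Defined.

Definition rset_cat (G : Group) (P : RSet G -> Prop) : Category.
Proof.
  refine (@mkConcrete { X : RSet G | P X } (fun X => rcar (proj1_sig X))
    (fun X Y f => requivariant (proj1_sig X) (proj1_sig Y) f) _ _).
  - intros X g x. reflexivity.
  - intros X Y Z f h Hf Hh g x. rewrite Hf, Hh. reflexivity.
Defined.

Definition ACT (G : Group) : Category :=
  biset_cat G (fun X => is_product_of semi_invertible X).
Definition Act (G : Group) : Category :=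
  biset_cat G (fun X => finite_type (icar X) /\ is_product_of semi_invertible X).
Definition bACT (G : Group) : Category :=
  biset_cat G (fun X => is_product_of invertible_one_side X).
Definition bAct (G : Group) : Category :=
  biset_cat G (fun X => finite_type (icar X) /\ is_product_of invertible_one_side X).
Definition ACT_l (G : Group) : Category := lset_cat G (fun _ => True).
Definition ACT_r (G : Group) : Category := rset_cat G (fun _ => True).
Definition Act_l (G : Group) : Category := lset_cat G (fun X => finite_type (lcar X)).
Definition Act_r (G : Group) : Category := rset_cat G (fun X => finite_type (rcar X)).

(* For a group G every xi_l(i) and xi_r(i) is invertible, so every G-biset is
   semi-invertible and invertible on one side, and is trivially a product (of
   one factor) of such; the conditions defining Act(G), bAct(G), ACT(G),
   bACT(G) therefore reduce to finiteness or to nothing.  A G-biset X is then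
   the same thing as a left G-set under the diagonal action
   g.x = xi_l(g)((x)xi_r(g^-1)), with inverse construction the biset with
   trivial right action, and equivariant maps correspond exactly.  Left and
   right G-sets correspond via (x)g = g^-1.x. *)
From Stdlib Require Import ProofIrrelevance FunctionalExtensionality.

Section UnitIsoComp.
Variables (C D E : Category) (X : Functor C D) (Y : Functor D C)
  (U : Functor D E) (V : Functor E D).

Lemma unit_iso_comp :
  nat_iso (comp_functor Y X) (id_functor C) ->
  nat_iso (comp_functor V U) (id_functor D) ->
  nat_iso (comp_functor (comp_functor Y V) (comp_functor U X)) (id_functor C).
Proof.
  intros [a [b [ab [ba na]]]] [a' [b' [ab' [ba' na']]]]; cbn in *.
  exists (fun A => comp (a A) (fmap Y (a' (fobj X A)))),
         (fun A => comp (fmap Y (b' (fobj X A))) (b A)).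
  split; [|split].
  - intros A; cbn.
    rewrite comp_assoc, <- (comp_assoc _ _ _ _ _ (b A)), <- fmap_comp,
      ab', fmap_id, comp_id_l.
    apply ab.
  - intros A; cbn.
    rewrite comp_assoc, <- (comp_assoc _ _ _ _ _ _ (a A)), ba, comp_id_l,
      <- fmap_comp, ba'.
    apply fmap_id.
  - intros A B f; cbn.
    rewrite <- comp_assoc, na, !comp_assoc, <- !fmap_comp, na'.
    reflexivity.
Qed.
End UnitIsoComp.

Lemma equivalent_cats_sym (C D : Category) :
  equivalent_cats C D -> equivalent_cats D C.
Proof. intros (F & G & HGF & HFG). exists G, F. split; assumption. Qed.

Lemma equivalent_cats_trans (C D E : Category) :
  equivalent_cats C D -> equivalent_cats D E -> equivalent_cats C E.
Proof.
  intros (F1 & G1 & HGF1 & HFG1) (F2 & G2 & HGF2 & HFG2).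
  exists (comp_functor F2 F1), (comp_functor G1 G2).
  split; apply unit_iso_comp; assumption.
Qed.

Lemma equivalent_cats_through (A B L R : Category) :
  equivalent_cats A L -> equivalent_cats B L -> equivalent_cats L R ->
  equivalent_cats A B /\ equivalent_cats A L /\ equivalent_cats A R /\
  equivalent_cats B L /\ equivalent_cats B R /\ equivalent_cats L R.
Proof.
  intros AL BL LR.
  repeat split; try assumption.
  - exact (equivalent_cats_trans _ _ _ AL (equivalent_cats_sym _ _ BL)).
  - exact (equivalent_cats_trans _ _ _ AL LR).
  - exact (equivalent_cats_trans _ _ _ BL LR).
Qed.

Section GroupSets.
Variable G : Group.

Lemma ginv_unique (a b : G) : gmul G a b = gone G -> b = ginv G a.
Proof.
  intros H.
  rewrite <- (gmul1l G b), <- (gmulVl G a), <- gassoc, H, gmul1r.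
  reflexivity.
Qed.

Lemma ginv_mul (a b : G) : ginv G (gmul G a b) = gmul G (ginv G b) (ginv G a).
Proof.
  symmetry. apply ginv_unique.
  rewrite <- gassoc, (gassoc G b), gmulVr, gmul1l, gmulVr.
  reflexivity.
Qed.

Lemma ginv_one : ginv G (gone G) = gone G.
Proof. symmetry. apply ginv_unique, gmul1l. Qed.

Lemma ginv_ginv (a : G) : ginv G (ginv G a) = a.
Proof. symmetry. apply ginv_unique, gmulVl. Qed.

Lemma il_inv_l (X : ISet G) i x : il X (ginv G i) (il X i x) = x.
Proof. rewrite <- il_mul, gmulVl. apply il_one. Qed.

Lemma il_inv_r (X : ISet G) i x : il X i (il X (ginv G i) x) = x.
Proof. rewrite <- il_mul, gmulVr. apply il_one. Qed.

Lemma il_bijective (X : ISet G) i : bijective (il X i).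
Proof. exists (il X (ginv G i)). split; intros; [apply il_inv_l | apply il_inv_r]. Qed.

Lemma semi_invertible_group (X : ISet G) : semi_invertible X.
Proof. intros i. left. apply il_bijective. Qed.

Lemma invertible_one_side_group (X : ISet G) : invertible_one_side X.
Proof. left. apply il_bijective. Qed.

Lemma is_product_of_self (P : ISet G -> Prop) (X : ISet G) :
  P X -> is_product_of P X.
Proof.
  intros HP. exists unit, (fun _ => X), (fun x _ => x).
  split; [intros; exact HP |]. split; [| split; reflexivity].
  exists (fun h => h tt). split; [reflexivity |].
  intros h. apply functional_extensionality. intros []. reflexivity.
Qed.

Definition diag_lset (X : ISet G) : LSet G.
Proof.
  refine {| lcar := icar X; lact := fun i x => il X i (ir X (ginv G i) x) |}.
  - intros x. rewrite ginv_one, ir_one, il_one. reflexivity.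
  - intros g h x. rewrite ginv_mul, ir_mul, il_mul, (il_ir _ X h). reflexivity.
Defined.

Definition lset_biset (Y : LSet G) : ISet G.
Proof.
  refine {| icar := lcar Y; il := lact Y; ir := fun _ x => x;
            il_one := lact_one _ Y; il_mul := lact_mul _ Y |}; reflexivity.
Defined.

Lemma lequivariant_diag_lset (X Y : ISet G) f :
  iequivariant X Y f -> lequivariant (diag_lset X) (diag_lset Y) f.
Proof.
  intros Hf i y. cbn.
  specialize (Hf i (ir X (ginv G i) y)).
  rewrite ir_inv_r in Hf.
  rewrite <- (il_ir _ Y), <- Hf, ir_inv_l.
  reflexivity.
Qed.

Section BisetLset.
Variables (P : ISet G -> Prop) (Q : LSet G -> Prop).
Hypothesis diag_lset_Q : forall X, P X -> Q (diag_lset X).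
Hypothesis lset_biset_P : forall Y, Q Y -> P (lset_biset Y).

Definition diag_lset_functor : Functor (biset_cat G P) (lset_cat G Q).
Proof.
  unshelve refine
    {| fobj := fun X : Ob (biset_cat G P) =>
         (exist Q (diag_lset (proj1_sig X)) (diag_lset_Q _ (proj2_sig X))
          : Ob (lset_cat G Q));
       fmap := fun X Y f => exist _ (proj1_sig f) _ |}.
  - exact (lequivariant_diag_lset _ _ _ (proj2_sig f)).
  - intros X. apply subset_eq_compat. reflexivity.
  - intros. apply subset_eq_compat. reflexivity.
Defined.

Definition lset_biset_functor : Functor (lset_cat G Q) (biset_cat G P).
Proof.
  unshelve refine
    {| fobj := fun Y : Ob (lset_cat G Q) =>
         (exist P (lset_biset (proj1_sig Y)) (lset_biset_P _ (proj2_sig Y))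
          : Ob (biset_cat G P));
       fmap := fun X Y f => exist _ (proj1_sig f) _ |}.
  - intros i x. apply (proj2_sig f).
  - intros Y. apply subset_eq_compat. reflexivity.
  - intros. apply subset_eq_compat. reflexivity.
Defined.

Lemma biset_lset_equiv : equivalent_cats (biset_cat G P) (lset_cat G Q).
Proof.
  exists diag_lset_functor, lset_biset_functor. split.
  - unshelve eexists; [intros X; exists (fun x => x) |].
    { intros i x; cbn. rewrite il_ir, ir_inv_r. reflexivity. }
    unshelve eexists; [intros X; exists (fun x => x) |].
    { intros i x; cbn. rewrite ir_inv_l. reflexivity. }
    split; [| split]; intros; apply subset_eq_compat; reflexivity.
  - unshelve eexists; [intros Y; exists (fun x => x); intros i x; reflexivity |].
    unshelve eexists; [intros Y; exists (fun x => x); intros i x; reflexivity |].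
    split; [| split]; intros; apply subset_eq_compat; reflexivity.
Qed.
End BisetLset.

Definition rset_of_lset (Y : LSet G) : RSet G.
Proof.
  refine {| rcar := lcar Y; ract := fun i x => lact Y (ginv G i) x |}.
  - intros x. rewrite ginv_one. apply lact_one.
  - intros g h x. rewrite ginv_mul. apply lact_mul.
Defined.

Definition lset_of_rset (Y : RSet G) : LSet G.
Proof.
  refine {| lcar := rcar Y; lact := fun i x => ract Y (ginv G i) x |}.
  - intros x. rewrite ginv_one. apply ract_one.
  - intros g h x. rewrite ginv_mul. apply ract_mul.
Defined.

Section LsetRset.
Variables (P : LSet G -> Prop) (Q : RSet G -> Prop).
Hypothesis rset_of_lset_Q : forall X, P X -> Q (rset_of_lset X).
Hypothesis lset_of_rset_P : forall Y, Q Y -> P (lset_of_rset Y).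

Definition rset_of_lset_functor : Functor (lset_cat G P) (rset_cat G Q).
Proof.
  unshelve refine
    {| fobj := fun X : Ob (lset_cat G P) =>
         (exist Q (rset_of_lset (proj1_sig X)) (rset_of_lset_Q _ (proj2_sig X))
          : Ob (rset_cat G Q));
       fmap := fun X Y f => exist _ (proj1_sig f) _ |}.
  - intros i x. apply (proj2_sig f).
  - intros X. apply subset_eq_compat. reflexivity.
  - intros. apply subset_eq_compat. reflexivity.
Defined.

Definition lset_of_rset_functor : Functor (rset_cat G Q) (lset_cat G P).
Proof.
  unshelve refine
    {| fobj := fun Y : Ob (rset_cat G Q) =>
         (exist P (lset_of_rset (proj1_sig Y)) (lset_of_rset_P _ (proj2_sig Y))
          : Ob (lset_cat G P));
       fmap := fun X Y f => exist _ (proj1_sig f) _ |}.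
  - intros i x. apply (proj2_sig f).
  - intros Y. apply subset_eq_compat. reflexivity.
  - intros. apply subset_eq_compat. reflexivity.
Defined.

Lemma lset_rset_equiv : equivalent_cats (lset_cat G P) (rset_cat G Q).
Proof.
  exists rset_of_lset_functor, lset_of_rset_functor.
  split;
    do 2 (unshelve eexists;
            [intros X; exists (fun x => x); intros i x; cbn;
             rewrite ginv_ginv; reflexivity |]);
    repeat split; intros; apply subset_eq_compat; reflexivity.
Qed.
End LsetRset.

Lemma Act_equiv_Act_l : equivalent_cats (Act G) (Act_l G).
Proof.
  apply biset_lset_equiv.
  - intros X [HX _]. exact HX.
  - intros Y HY. split; [exact HY |].
    apply is_product_of_self, semi_invertible_group.
Qed.

Lemma bAct_equiv_Act_l : equivalent_cats (bAct G) (Act_l G).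
Proof.
  apply biset_lset_equiv.
  - intros X [HX _]. exact HX.
  - intros Y HY. split; [exact HY |].
    apply is_product_of_self, invertible_one_side_group.
Qed.

Lemma ACT_equiv_ACT_l : equivalent_cats (ACT G) (ACT_l G).
Proof.
  apply biset_lset_equiv; [trivial |].
  intros Y _. apply is_product_of_self, semi_invertible_group.
Qed.

Lemma bACT_equiv_ACT_l : equivalent_cats (bACT G) (ACT_l G).
Proof.
  apply biset_lset_equiv; [trivial |].
  intros Y _. apply is_product_of_self, invertible_one_side_group.
Qed.

Lemma Act_l_equiv_Act_r : equivalent_cats (Act_l G) (Act_r G).
Proof. apply lset_rset_equiv; trivial. Qed.

Lemma ACT_l_equiv_ACT_r : equivalent_cats (ACT_l G) (ACT_r G).
Proof. apply lset_rset_equiv; trivial. Qed.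

End GroupSets.

Theorem mainTheorem6 (G : Group) :
  (equivalent_cats (Act G) (bAct G) /\ equivalent_cats (Act G) (Act_l G) /\
   equivalent_cats (Act G) (Act_r G) /\ equivalent_cats (bAct G) (Act_l G) /\
   equivalent_cats (bAct G) (Act_r G) /\ equivalent_cats (Act_l G) (Act_r G)) /\
  (equivalent_cats (ACT G) (bACT G) /\ equivalent_cats (ACT G) (ACT_l G) /\
   equivalent_cats (ACT G) (ACT_r G) /\ equivalent_cats (bACT G) (ACT_l G) /\
   equivalent_cats (bACT G) (ACT_r G) /\ equivalent_cats (ACT_l G) (ACT_r G)).
Proof.
  split; apply equivalent_cats_through.
  - apply Act_equiv_Act_l.
  - apply bAct_equiv_Act_l.
  - apply Act_l_equiv_Act_r.
  - apply ACT_equiv_ACT_l.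
  - apply bACT_equiv_ACT_l.
  - apply ACT_l_equiv_ACT_r.
Qed.
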